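(* Let $d\ge 2$, $x\in\mathbb{R}^d$, $V\subseteq\{1,\dots,d\}$ (of any parity), and let $\theta\in\{\pm1\}^d$ with $\theta_j=1$ for $j\in V$ and $\theta_j=-1$ for $j\notin V$. Let $v = \Pi_{\{w\in\mathbb{R}^d:\theta^\top w = |V|-1\}}(x)$ and let $F := \{w\in[0,1]^d : \theta^\top w = |V|-1\}$, assumed nonempty, and $z = \Pi_F(x)$. Let $i\in\{1,\dots,d\}$. Then: 1. If $v_i>1$ and $\theta_i = 1$, then $z_i = 1$. 2. If $v_i<0$ and $\theta_i=-1$, then $z_i=0$.
   Context: $\Pi_C(x)$ denotes the Euclidean projection of $x$ onto a closed convex set $C$. *)

From HB Require Import structures.
From mathcomp Require Import all_boot all_order all_algebra.
From mathcomp Require Import reals.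
Set Implicit Arguments. Unset Strict Implicit. Unset Printing Implicit Defensive.
Import Order.TTheory GRing.Theory Num.Theory.
Local Open Scope ring_scope.

Definition eucl_dist (R : realType) (d : nat) (x y : 'I_d -> R) : R :=
  Num.sqrt (\sum_(j < d) (x j - y j) ^+ 2).

(* z is the Euclidean projection of x onto the set C (a minimiser of the
   distance to x over C); for closed convex nonempty C it is unique. *)
Definition is_proj (R : realType) (d : nat) (C : ('I_d -> R) -> Prop)
  (x z : 'I_d -> R) : Prop :=
  C z /\ forall w, C w -> eucl_dist x z <= eucl_dist x w.

Definition theta (R : realType) (d : nat) (V : {set 'I_d}) (j : 'I_d) : R :=
  if j \in V then 1 else -1.

Definition hyp (R : realType) (d : nat) (V : {set 'I_d}) (w : 'I_d -> R) : Prop :=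
  \sum_(j < d) theta R V j * w j = (#|V|%:R - 1).

Definition face (R : realType) (d : nat) (V : {set 'I_d}) (w : 'I_d -> R) : Prop :=
  (forall j, 0 <= w j <= 1) /\ hyp V w.

(* The affine involution [w |-> 1_V - theta * w] is an isometry of R^d that maps
   the hyperplane [theta^T w = |V| - 1] onto [sum w = 1] and the face F onto the
   probability simplex; it sends [v_i > 1, theta_i = 1] and [v_i < 0, theta_i = -1]
   to a negative coordinate, and [z_i = 1], [z_i = 0] to a zero coordinate.  So it
   suffices to show: if q and p are the projections of y onto [sum w = 1] and onto
   the simplex, then [q_i < 0] forces [p_i = 0].  Moving mass t from coordinate i
   to j changes the squared distance by [2t((y_i - p_i) - (y_j - p_j)) + 2t^2];
   hence the residual [y - q] is constant, while [y_i - p_i] is the largest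
   residual of [y - p] when [p_i > 0].  As both residuals have sum [sum y - 1],
   this gives [p_i <= q_i < 0], a contradiction. *)
From HB Require Import structures.
From mathcomp Require Import all_boot all_order all_algebra.
From mathcomp Require Import reals ring lra.
From mathcomp Require Import boolp.
Set Implicit Arguments. Unset Strict Implicit. Unset Printing Implicit Defensive.
Import Order.TTheory GRing.Theory Num.Theory.
Local Open Scope ring_scope.

Section Projections.
Variables (R : realType) (d : nat).
Implicit Types (x y p q w : 'I_d -> R) (i j k : 'I_d).

Definition sqdist x y : R := \sum_k (x k - y k) ^+ 2.

Lemma le_eucl_dist x a b :
  (eucl_dist x a <= eucl_dist x b) = (sqdist x a <= sqdist x b).
Proof. by rewrite ler_sqrt //; apply: sumr_ge0 => k _; apply: sqr_ge0. Qed.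

Lemma is_proj_involution (C C' : ('I_d -> R) -> Prop) (f : ('I_d -> R) -> 'I_d -> R) x z :
  involutive f -> (forall a b, sqdist (f a) (f b) = sqdist a b) ->
  (forall w, C' w <-> C (f w)) ->
  is_proj C x z -> is_proj C' (f x) (f z).
Proof.
move=> fK f_iso C'E [Cz z_min]; split; first by apply/C'E; rewrite fK.
move=> w /C'E /z_min; rewrite !le_eucl_dist -(f_iso x (f w)) fK.
by rewrite -(f_iso x z).
Qed.

Definition sum_one w : Prop := \sum_k w k = 1.

Definition simplex w : Prop := (forall k, 0 <= w k) /\ sum_one w.

Definition move_mass p i j (t : R) : 'I_d -> R :=
  fun k => if k == i then p i - t else if k == j then p j + t else p k.

Lemma sum_except2 (f g : 'I_d -> R) i j : i != j ->
  (forall k, k != i -> k != j -> f k = g k) ->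
  \sum_k f k = \sum_k g k + (f i - g i) + (f j - g j).
Proof.
move=> nij fg; rewrite (bigD1 i) // (bigD1 j) 1?eq_sym //= [in RHS](bigD1 i) //.
rewrite [in RHS](bigD1 j) 1?eq_sym //= (eq_bigr g); last first.
  by move=> k /andP[ki kj]; apply: fg.
set S := \sum_(_ < _ | _) _; lra.
Qed.

Lemma sum_move_mass p i j t : i != j ->
  \sum_k move_mass p i j t k = \sum_k p k.
Proof.
move=> nij; rewrite (@sum_except2 (move_mass p i j t) p i j nij).
  by rewrite /move_mass !eqxx eq_sym (negbTE nij); lra.
by move=> k /negbTE ki /negbTE kj; rewrite /move_mass ki kj.
Qed.

Lemma sqdist_move_mass y p i j t : i != j ->
  sqdist y (move_mass p i j t) =
  sqdist y p + 2 * t * ((y i - p i) - (y j - p j)) + 2 * t ^+ 2.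
Proof.
move=> nij; rewrite /sqdist (@sum_except2 _ (fun k => (y k - p k) ^+ 2) i j nij).
  by rewrite /move_mass !eqxx eq_sym (negbTE nij) /=; set S := \sum_(_ < _) _; lra.
by move=> k /negbTE ki /negbTE kj; rewrite /move_mass ki kj.
Qed.

Lemma residual_le_of_move_mass y p i j (e : R) : 0 < e ->
  (forall t, 0 < t <= e -> sqdist y p <= sqdist y (move_mass p i j t)) ->
  y j - p j <= y i - p i.
Proof.
move=> e_gt0 p_min; have [->//|nij] := eqVneq i j.
rewrite leNgt; apply/negP => lt_ab.
pose t := Num.min e ((y j - p j - (y i - p i)) / 2).
have t_gt0 : 0 < t by rewrite lt_min e_gt0; lra.
have t_le : t <= (y j - p j - (y i - p i)) / 2 by rewrite ge_min lexx orbT.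
have := p_min t; rewrite t_gt0 ge_min lexx /= sqdist_move_mass // -addrA lerDl.
have -> : 2 * t * (y i - p i - (y j - p j)) + 2 * t ^+ 2 =
          2 * t * (t - (y j - p j - (y i - p i))) by ring.
by rewrite pmulr_rge0; lra.
Qed.

Lemma proj_sum_one_residual y q i j :
  is_proj sum_one y q -> y j - q j = y i - q i.
Proof.
move=> [q1 q_min].
have le_res k l : y l - q l <= y k - q k.
  have [->//|nkl] := eqVneq k l.
  apply: (residual_le_of_move_mass ltr01) => t _.
  by rewrite -le_eucl_dist; apply/q_min; rewrite /sum_one sum_move_mass.
by apply/eqP; rewrite eq_le !le_res.
Qed.

Lemma proj_simplex_residual y p i j :
  is_proj simplex y p -> 0 < p i -> y j - p j <= y i - p i.
Proof.
move=> [[p_ge0 p1] p_min] pi_gt0; have [->//|nij] := eqVneq i j.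
apply: (residual_le_of_move_mass pi_gt0) => t /andP[t_gt0 t_le].
rewrite -le_eucl_dist; apply/p_min; split; last by rewrite /sum_one sum_move_mass.
move=> k; rewrite /move_mass; case: ifP => _; first lra.
by case: ifP => _ //; have := p_ge0 j; lra.
Qed.

Lemma sum_residual y w : sum_one w -> \sum_k (y k - w k) = \sum_k y k - 1.
Proof. by rewrite sumrB => ->. Qed.

Lemma proj_simplex_eq0 y q p i :
  is_proj sum_one y q -> is_proj simplex y p -> q i < 0 -> p i = 0.
Proof.
move=> q_proj p_proj qi_lt0; have [[p_ge0 p1] _] := p_proj.
have [//|pi_neq0] := eqVneq (p i) 0.
have pi_gt0 : 0 < p i by rewrite lt_def pi_neq0 p_ge0.
have d_gt0 : (0 < d)%N by apply: leq_ltn_trans (ltn_ord i).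
have : (y i - q i) *+ d <= (y i - p i) *+ d.
  have -> : (y i - q i) *+ d = \sum_k (y k - q k).
    rewrite (eq_bigr _ (fun j _ => proj_sum_one_residual i j q_proj)).
    by rewrite sumr_const card_ord.
  rewrite (sum_residual y q_proj.1) -(sum_residual y p1).
  rewrite -[d in _ *+ d]card_ord -sumr_const.
  by apply: ler_sum => j _; apply: proj_simplex_residual.
by rewrite ler_pMn2r // lerD2l lerN2; lra.
Qed.

End Projections.

Section Reflection.
Variables (R : realType) (d : nat) (V : {set 'I_d}).
Implicit Types (w : 'I_d -> R) (k : 'I_d).

Definition reflectV w : 'I_d -> R :=
  fun k => (if k \in V then 1 else 0) - theta R V k * w k.

Lemma theta_eq1 k : theta R V k = 1 -> k \in V.
Proof. by rewrite /theta; case: ifP => // _ h; exfalso; lra. Qed.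

Lemma theta_eqN1 k : theta R V k = -1 -> k \notin V.
Proof. by rewrite /theta; case: ifP => // _ h; exfalso; lra. Qed.

Lemma reflectV_in w k : k \in V -> reflectV w k = 1 - w k.
Proof. by rewrite /reflectV /theta => ->; rewrite mul1r. Qed.

Lemma reflectV_notin w k : k \notin V -> reflectV w k = w k.
Proof. by rewrite /reflectV /theta => /negbTE ->; rewrite mulN1r sub0r opprK. Qed.

Lemma reflectVK : involutive reflectV.
Proof.
by move=> w; apply/funext => k; rewrite /reflectV /theta; case: (k \in V) => /=; ring.
Qed.

Lemma sqdist_reflectV a b : sqdist (reflectV a) (reflectV b) = sqdist a b.
Proof.
by apply: eq_bigr => k _; rewrite /reflectV /theta; case: (k \in V) => /=; ring.
Qed.

Lemma sum_reflectV w :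
  \sum_k reflectV w k = #|V|%:R - \sum_k theta R V k * w k.
Proof. by rewrite sumrB -big_mkcond /= sumr_const. Qed.

Lemma hyp_reflectV w : sum_one w <-> hyp V (reflectV w).
Proof.
rewrite /sum_one /hyp -[X in \sum_k X k = 1](reflectVK w) sum_reflectV.
by split=> h; lra.
Qed.

Lemma face_reflectV w : simplex w <-> face V (reflectV w).
Proof.
have w_le1 : simplex w -> forall k, w k <= 1.
  move=> [w_ge0 <-] k; rewrite (bigD1 k) //= lerDl.
  by apply: sumr_ge0 => j _; apply: w_ge0.
rewrite /face -hyp_reflectV /reflectV /theta.
split=> [ws | [w01 w1]].
  split=> [k|]; last exact: ws.2.
  by have := ws.1 k; have := w_le1 ws k; case: (k \in V) => ? ?; apply/andP; lra.
split=> // k; have := w01 k; case: (k \in V) => /andP[? ?]; lra.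
Qed.

Lemma is_proj_reflectV (C C' : ('I_d -> R) -> Prop) x z :
  (forall w, C' w <-> C (reflectV w)) ->
  is_proj C x z -> is_proj C' (reflectV x) (reflectV z).
Proof. exact: is_proj_involution reflectVK sqdist_reflectV. Qed.

End Reflection.

Theorem theorem2 (R : realType) (d : nat) (x : 'I_d -> R) (V : {set 'I_d})
  (v z : 'I_d -> R) (i : 'I_d) :
  (2 <= d)%N ->
  is_proj (hyp V) x v ->
  (exists w : 'I_d -> R, face V w) ->
  is_proj (face V) x z ->
  (1 < v i -> theta R V i = 1 -> z i = 1) /\
  (v i < 0 -> theta R V i = -1 -> z i = 0).
Proof.
move=> _ v_proj _ z_proj.
have reflected_zero : reflectV V v i < 0 -> reflectV V z i = 0.
  apply: proj_simplex_eq0.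
    exact: is_proj_reflectV (@hyp_reflectV R d V) v_proj.
  exact: is_proj_reflectV (@face_reflectV R d V) z_proj.
split=> [vi /theta_eq1 iV | vi /theta_eqN1 iV].
  suff: 1 - z i = 0 by lra.
  by rewrite -(reflectV_in z iV); apply: reflected_zero; rewrite reflectV_in //; lra.
by rewrite -(reflectV_notin z iV); apply: reflected_zero; rewrite reflectV_notin.
Qed.
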